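(* Let $D$ be a positive integer that is not a perfect square, and let $Q_1,Q_2,Q_3$ be forms in the principal cycle of determinant $D$. Suppose $\tilde I\approx Q_1$ via $S_1=\pm L_{k_1}$ and $\tilde I\approx Q_2$ via $S_2=\pm L_{k_2}$, where $k_1,k_2\ge0$. Suppose $Q_3=Q_1\circ Q_2$ via a bilinear matrix $B$ with $\log\|B\|\le c_1\log D$ for a constant $c_1$. Let $S_3$ be defined by $S_3B=B_0(S_1\otimes S_2)$, where $B_0=\begin{pmatrix}1&0&0&D-\lambda^2\\0&1&1&2\lambda\end{pmatrix}$, $\lambda=\lfloor\sqrt D\rfloor$, and suppose $S_3=\pm L_{k_3}$. Define $\xi$ by $$\log\|L_{k_3}\|=\log\|L_{k_1}\|+\log\|L_{k_2}\|+\xi.$$ Then $|\xi|\le (c_1+4)\log D$.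
   Context: Forms $[a,2b,c]$ mean $ax_1^2+2bx_1x_2+cx_2^2$ with matrix $\begin{pmatrix} a&b\\ b&c\end{pmatrix}$, determinant $b^2-ac$. $Q\approx Q'$ via $S$: $S$ integer $2\times2$, $\det S=1$, $S^tQS=Q'$. Reduced form of determinant $D$: $0<b<\sqrt D$, $\sqrt D-b<|a|<\sqrt D+b$. $\tilde I=[1,2\lambda,\lambda^2-D]$. The right neighbor of a reduced $Q_1=[a_1,2b_1,c_1]$ is $S^tQ_1S$ with $S=\begin{pmatrix}0&1\\-1&\mu\end{pmatrix}$, $\mu$ the integer with $-\sqrt D-b_1<\mu c_1<-\sqrt D-b_1+|c_1|$. Principal cycle: $Q^{(0)}=\tilde I$, $Q^{(j)}$ the right neighbor of $Q^{(j-1)}$, $S^{(j)}$ the corresponding matrix; $L_0=$ identity, $L_j=S^{(1)}\cdots S^{(j)}$ for $j\ge1$; the cycle has least period $2p$; for negative $j$, $S^{(j)}=(S^{(j_0)})^{-1}$ with $j\equiv j_0\pmod{2p}$, $0<j_0\le2p$, and $L_{-j}=S^{(-j)}\cdots S^{(-1)}$. Composition $Q_3=Q_1\circ Q_2$ via a $2\times4$ integer matrix $B$: $(x^tQ_1x)(y^tQ_2y)=z^tB^tQ_3Bz$ identically with $z=(x_1y_1,x_1y_2,x_2y_1,x_2y_2)^t$, where $B$ is unimodular (its six $2\times2$ minors $\Delta_{ik}$ from columns $i<k$ have gcd 1) and oriented ($a_1\Delta_{12}>0$, $a_2\Delta_{13}>0$, $a_i$ the leading coefficient of $Q_i$). $\otimes$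 is the Kronecker product. $\|M\|$ is the maximum absolute value of the entries of $M$. Logarithms: $\log x=\log_2|x|$ if $|x|\ge4$, and $\log x=2$ if $|x|<4$. *)

From HB Require Import structures.
From Stdlib Require Import ClassicalEpsilon.
From mathcomp Require Import all_boot all_order all_algebra.
From mathcomp Require Import reals Rstruct exp.
Set Implicit Arguments. Unset Strict Implicit. Unset Printing Implicit Defensive.
Import Order.TTheory GRing.Theory Num.Theory.
Local Open Scope ring_scope.

Notation R := Rdefinitions.R.

(* A bqform [a,2b,c] is stored as the triple (a,b,c). *)
Definition bqform := (int * int * int)%type.
Definition fa (q : bqform) : int := q.1.1.
Definition fb (q : bqform) : int := q.1.2.
Definition fc (q : bqform) : int := q.2.

Definition fmat (q : bqform) : 'M[int]_2 :=
  \matrix_(i < 2, j < 2)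
    (if (i == 0 :> nat) && (j == 0 :> nat) then fa q
     else if (i == 1 :> nat) && (j == 1 :> nat) then fc q else fb q).

Definition form_of_mat (M : 'M[int]_2) : bqform := (M 0 0, M 0 1, M 1 1).

Definition fdet (q : bqform) : int := fb q ^+ 2 - fa q * fc q.

Definition equiv_via (Q Q' : bqform) (S : 'M[int]_2) : Prop :=
  \det S = 1 /\ S^T *m fmat Q *m S = fmat Q'.

Definition toR (z : int) : R := z%:~R.
Definition sqrtD (D : int) : R := Num.sqrt (toR D).
Definition lam (D : int) : int := Num.floor (sqrtD D).

Definition Itilde (D : int) : bqform := (1, lam D, lam D ^+ 2 - D).

Definition reduced (D : int) (q : bqform) : Prop :=
  0 < toR (fb q) < sqrtD D /\
  sqrtD D - toR (fb q) < toR `|fa q| < sqrtD D + toR (fb q).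

Definition mu_spec (D : int) (q : bqform) (mu : int) : Prop :=
  - sqrtD D - toR (fb q) < toR (mu * fc q) /\
  toR (mu * fc q) < - sqrtD D - toR (fb q) + toR `|fc q|.

Definition mu_of (D : int) (q : bqform) : int :=
  epsilon (inhabits 0) (mu_spec D q).

Definition nbr_mat (mu : int) : 'M[int]_2 :=
  \matrix_(i < 2, j < 2)
    (if (i == 0 :> nat) then (if (j == 0 :> nat) then 0 else 1)
     else (if (j == 0 :> nat) then -1 else mu)).

Definition nbrS (D : int) (q : bqform) : 'M[int]_2 := nbr_mat (mu_of D q).

Definition right_nbr (D : int) (q : bqform) : bqform :=
  form_of_mat ((nbrS D q)^T *m fmat q *m nbrS D q).

Fixpoint cycQ (D : int) (n : nat) : bqform :=
  match n with 0 => Itilde D | n'.+1 => right_nbr D (cycQ D n') end.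

(* S^(j) for j >= 1 (value at 0 is unused) *)
Definition cycS_nat (D : int) (n : nat) : 'M[int]_2 :=
  match n with 0 => 1%:M | n'.+1 => nbrS D (cycQ D n') end.

Definition least_period (D : int) (P : nat) : Prop :=
  (0 < P)%N /\ (forall j, cycQ D (j + P) = cycQ D j) /\
  (forall m, (0 < m)%N -> (forall j, cycQ D (j + m) = cycQ D j) -> (P <= m)%N).

Definition cyc_period (D : int) : nat := epsilon (inhabits 0%N) (least_period D).

(* S^(j) for all integers j (j = 0 unused) *)
Definition cycS (D : int) (j : int) : 'M[int]_2 :=
  match j with
  | Posz n => cycS_nat D n
  | Negz _ =>
      let P := cyc_period D in
      let r := (j %% (P%:Z))%Z in
      let j0 := if r == 0 then P else `|r|%N in
      invmx (cycS_nat D j0)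
  end.

(* L_k : L_0 = 1, L_k = S^(1)...S^(k), L_{-j} = S^(-j)...S^(-1) *)
Definition Lmat (D : int) (k : int) : 'M[int]_2 :=
  match k with
  | Posz n => \prod_(i < n) cycS D (i.+1)%:Z
  | Negz m => \prod_(i < m.+1) cycS D (i%:Z - (m.+1)%:Z)
  end.

Definition in_cycle (D : int) (q : bqform) : Prop := exists j : nat, q = cycQ D j.

Definition qval (q : bqform) (w : 'cV[int]_2) : int := (w^T *m fmat q *m w) 0 0.

(* z = (x1 y1, x1 y2, x2 y1, x2 y2)^t *)
Definition zvec (x y : 'cV[int]_2) : 'cV[int]_4 :=
  \col_(i < 4) (x (inord (i %/ 2)) 0 * y (inord (i %% 2)) 0).

Definition kron2 (A C : 'M[int]_2) : 'M[int]_4 :=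
  \matrix_(i < 4, j < 4)
    (A (inord (i %/ 2)) (inord (j %/ 2)) * C (inord (i %% 2)) (inord (j %% 2))).

Definition minor2 (B : 'M[int]_(2, 4)) (i k : 'I_4) : int :=
  B 0 i * B 1 k - B 0 k * B 1 i.

Definition unimodular24 (B : 'M[int]_(2, 4)) : Prop :=
  \big[gcdz/0]_(i < 4) \big[gcdz/0]_(k < 4 | (i < k)%N) minor2 B i k = 1.

Definition oriented (Q1 Q2 : bqform) (B : 'M[int]_(2, 4)) : Prop :=
  0 < fa Q1 * minor2 B 0 1 /\ 0 < fa Q2 * minor2 B 0 2.

Definition composes (Q1 Q2 Q3 : bqform) (B : 'M[int]_(2, 4)) : Prop :=
  (forall x y : 'cV[int]_2, qval Q1 x * qval Q2 y = qval Q3 (B *m zvec x y)) /\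
  unimodular24 B /\ oriented Q1 Q2 B.

Definition B0 (D : int) : 'M[int]_(2, 4) :=
  \matrix_(i < 2, j < 4)
    (if (i == 0 :> nat) then nth 0 [:: 1; 0; 0; D - lam D ^+ 2] j
     else nth 0 [:: 0; 1; 1; 2 * lam D] j).

Definition normm (m n : nat) (M : 'M[int]_(m, n)) : nat :=
  \max_(i < m) \max_(j < n) `|M i j|%N.

Definition logp (x : R) : R := if 4 <= `|x| then ln `|x| / ln 2 else 2.

(* Let w = lam + sqrt D and w' = lam - sqrt D be the roots of X^2 - 2 lam X - (D - lam^2),
   so that Itilde(x, y) = (x + y w)(x + y w').  Read column j of an integer matrix S as the
   number a_j = S_0j + S_1j w and its conjugate a'_j.  Passing to the right neighbour replaces
   (a'_0, a'_1) by (-a'_1, a'_0 + mu a'_1), and the inequality defining mu says precisely that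
   the new second conjugate is smaller than a'_1 in absolute value.  Hence every L_k, k >= 0,
   has |a'_j| <= 1, and since a_1 a'_0 - a_0 a'_1 = 2 sqrt D, its size ||L_k|| is at most
   2 max_j |a_j|.
   B0 is the multiplication table of Z[w] in the basis (1, w), so the column numbers of
   B0 (S1 (x) S2) are the products of those of S1 and S2; this gives
   ||S1|| ||S2|| <= 8 D ||S3 B||.  Conversely ||S3|| <= 2 ||S3 B|| ||B|| by Cramer's rule on a
   nonzero 2x2 minor of B.  So ||S3|| and ||S1|| ||S2|| agree up to a factor 16 D ||B||, and
   log = max(log_2, 2) is subadditive up to the constant 2 on [1, oo), which gives the bound. *)

From HB Require Import structures.
From mathcomp Require Import all_boot all_order all_algebra.
From mathcomp Require Import reals Rstruct exp.
From mathcomp Require Import zify ring lra.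
From Stdlib Require Import ClassicalEpsilon.
Set Implicit Arguments. Unset Strict Implicit. Unset Printing Implicit Defensive.
Import Order.TTheory GRing.Theory Num.Theory.
Local Open Scope ring_scope.

Lemma ord2_cases (i : 'I_2) : i = 0 \/ i = 1.
Proof. by case: i => [[|[|//]] lt_i2]; [left|right]; apply: val_inj. Qed.

Lemma mulmx2E (T : pzRingType) m n (A : 'M[T]_(m, 2)) (B : 'M[T]_(2, n)) i j :
  (A *m B) i j = A i 0 * B 0 j + A i 1 * B 1 j.
Proof.
by rewrite mxE !big_ord_recl big_ord0 addr0 (_ : lift 0 0 = 1 :> 'I_2) //; apply: val_inj.
Qed.

Lemma det_mx2 (T : comPzRingType) (A : 'M[T]_2) :
  \det A = A 0 0 * A 1 1 - A 0 1 * A 1 0.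
Proof.
rewrite (expand_det_row _ 0) !big_ord_recl big_ord0 addr0 /cofactor !det_mx11 !mxE /=.
have lift00 : lift 0 0 = 1 :> 'I_2 by apply: val_inj.
have lift10 : lift 1 0 = 0 :> 'I_2 by apply: val_inj.
by rewrite ?lift00 ?lift10 expr0 expr1 !mul1r mulN1r mulrN.
Qed.

Lemma fmat_sym q : (fmat q)^T = fmat q.
Proof.
by apply/matrixP => i j; rewrite !mxE; case: (ord2_cases i) => ->; case: (ord2_cases j) => ->.
Qed.

Lemma fmat01 q : fmat q 0 1 = fb q. Proof. by rewrite mxE. Qed.
Lemma fmat11 q : fmat q 1 1 = fc q. Proof. by rewrite mxE. Qed.

Lemma fmat_form_of_mat (M : 'M[int]_2) : M^T = M -> fmat (form_of_mat M) = M.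
Proof.
move=> M_sym; apply/matrixP => i j; rewrite mxE.
by case: (ord2_cases i) => ->; case: (ord2_cases j) => -> //=; rewrite -[in RHS]M_sym mxE.
Qed.

Lemma toRD m n : toR (m + n) = toR m + toR n. Proof. exact: intrD. Qed.
Lemma toRB m n : toR (m - n) = toR m - toR n. Proof. exact: intrB. Qed.
Lemma toRN n : toR (- n) = - toR n. Proof. exact: intrN. Qed.
Lemma toRM m n : toR (m * n) = toR m * toR n. Proof. exact: intrM. Qed.
Lemma toRX n k : toR (n ^+ k) = toR n ^+ k. Proof. exact: rmorphXn. Qed.
Lemma toR0 : toR 0 = 0. Proof. exact: rmorph0. Qed.
Lemma toR1 : toR 1 = 1. Proof. exact: rmorph1. Qed.
Lemma toR_norm n : toR `|n| = `|toR n|. Proof. exact: intr_norm. Qed.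
Definition toRE := (toRD, toRB, toRN, toRM, toRX).

Section MatrixNorm.
Variables m n : nat.
Implicit Types M : 'M[int]_(m, n).

Lemma normm_ge M i j : `|M i j| <= (normm M)%:Z.
Proof.
rewrite -abszE lez_nat /normm.
exact: leq_trans (leq_bigmax j) (leq_bigmax i).
Qed.

Lemma normm_le M (c : nat) : (forall i j, `|M i j| <= c%:Z) -> (normm M <= c)%N.
Proof.
move=> M_le; apply/bigmax_leqP => i _; apply/bigmax_leqP => j _.
by rewrite -lez_nat abszE.
Qed.

Lemma normmN M : normm (- M) = normm M.
Proof. by apply: eq_bigr => i _; apply: eq_bigr => j _; rewrite mxE abszN. Qed.

Lemma normm_gt0 M : M != 0 -> (0 < normm M)%N.
Proof.
apply: contraNT; rewrite -leqNgt leqn0 => /eqP M0; apply/eqP/matrixP => i j.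
by have := normm_ge M i j; rewrite M0 normr_le0 mxE => /eqP.
Qed.

End MatrixNorm.

Lemma normm_det1_gt0 n (S : 'M[int]_n.+1) : \det S = 1 -> (0 < normm S)%N.
Proof.
move=> detS; apply: normm_gt0; apply: contra_eqN detS => /eqP ->.
by rewrite det0 eq_sym oner_eq0.
Qed.

Lemma normm_attained m n (M : 'M[int]_(m.+1, n.+1)) : exists i j, normm M = `|M i j|%N.
Proof.
have card_gt0 k : (0 < #|'I_k.+1|)%N by rewrite card_ord.
rewrite /normm; have [i ->] := bigop.eq_bigmax (fun i => \max_(j < n.+1) `|M i j|%N) (card_gt0 m).
by have [j ->] := bigop.eq_bigmax (fun j => `|M i j|%N) (card_gt0 n); exists i, j.
Qed.

Lemma normm_le_real m n (M : 'M[int]_(m.+1, n.+1)) (x : R) :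
  (forall i j, `|toR (M i j)| <= x) -> toR (normm M) <= x.
Proof. by have [i [j ->]] := normm_attained M; rewrite abszE toR_norm. Qed.

Lemma normm_mulmx m n p (A : 'M[int]_(m, n)) (B : 'M[int]_(n, p)) :
  (normm (A *m B) <= n * normm A * normm B)%N.
Proof.
apply: normm_le => i j; rewrite mxE.
apply: le_trans (ler_norm_sum _ _ _) _.
apply: le_trans (ler_sum (I := 'I_n) (G := fun=> (normm A * normm B)%N%:Z) _ _) _.
  by move=> k _; rewrite normrM PoszM ler_pM ?normm_ge.
by rewrite sumr_const card_ord -mulr_natl natz -PoszM mulnA.
Qed.

Lemma normm_kron2 (A C : 'M[int]_2) : (normm (kron2 A C) <= normm A * normm C)%N.
Proof. by apply: normm_le => i j; rewrite mxE normrM PoszM ler_pM ?normm_ge. Qed.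

Lemma unimodular24_minor (B : 'M[int]_(2, 4)) :
  unimodular24 B -> exists i k, minor2 B i k != 0.
Proof.
move=> unimod_B.
have [/existsP [i /existsP [k nz_ik]]|] := boolP [exists i, exists k, minor2 B i k != 0].
  by exists i, k.
rewrite negb_exists => /forallP minors0; move: unimod_B; rewrite /unimodular24.
suff -> : \big[gcdz/0]_(i < 4) \big[gcdz/0]_(k < 4 | (i < k)%N) minor2 B i k = 0 by [].
apply: (big_ind (fun x => x = 0)) => [//|x y -> ->//|i _].
apply: (big_ind (fun x => x = 0)) => [//|x y -> ->//|k _].
by apply/eqP; move: (minors0 i); rewrite negb_exists => /forallP/(_ k)/negPn.
Qed.

Lemma normm_cramer m (S : 'M[int]_(m, 2)) (B : 'M[int]_(2, 4)) i k :
  minor2 B i k != 0 -> (normm S <= 2 * normm (S *m B) * normm B)%N.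
Proof.
move=> nz_ik; apply: normm_le => r c; set M := S *m B.
have entry_le u v w : `|M r u * B v w| <= (normm M * normm B)%N%:Z.
  by rewrite normrM PoszM ler_pM ?normm_ge.
have cramer : minor2 B i k * S r c = if c == 0 then M r i * B 1 k - M r k * B 1 i
                                     else M r k * B 0 i - M r i * B 0 k.
  by rewrite /M !mulmx2E /minor2; case: (ord2_cases c) => -> /=; ring.
have : `|minor2 B i k * S r c| <= (2 * normm M * normm B)%N%:Z.
  rewrite cramer -mulnA PoszM (mulr_natl _ 2).
  by case: ifP => _; apply: le_trans (ler_normB _ _) _; rewrite mulr2n lerD.
apply: le_trans; rewrite normrM ler_peMl //.
by rewrite -gtz0_ge1 normr_gt0.
Qed.

Definition colv n (t : R) (S : 'M[int]_(2, n)) (j : 'I_n) : R := toR (S 0 j) + toR (S 1 j) * t.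

Definition omega (D : int) : R := toR (lam D) + sqrtD D.
Definition omega' (D : int) : R := toR (lam D) - sqrtD D.

Lemma colv_cross (t t' : R) (S : 'M[int]_2) :
  colv t S 1 * colv t' S 0 - colv t S 0 * colv t' S 1 = (t - t') * toR (\det S).
Proof. by rewrite /colv det_mx2 !toRE; ring. Qed.

Lemma colv_cross_omega D (S : 'M[int]_2) : \det S = 1 ->
  colv (omega D) S 1 * colv (omega' D) S 0 - colv (omega D) S 0 * colv (omega' D) S 1
  = 2 * sqrtD D.
Proof. by move=> detS; rewrite colv_cross detS toR1 /omega /omega'; ring. Qed.

Lemma colvN n t (S : 'M[int]_(2, n)) j : colv t (- S) j = - colv t S j.
Proof. by rewrite /colv !mxE !toRN; ring. Qed.

Lemma colv_nbr0 t (S : 'M[int]_2) mu : colv t (S *m nbr_mat mu) 0 = - colv t S 1.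
Proof. by rewrite /colv !mulmx2E !mxE /= !toRE; ring. Qed.

Lemma colv_nbr1 t (S : 'M[int]_2) mu :
  colv t (S *m nbr_mat mu) 1 = colv t S 0 + toR mu * colv t S 1.
Proof. by rewrite /colv !mulmx2E !mxE /= !toRE; ring. Qed.

(* [inord] falls back to 0 out of range. *)
Lemma inord2E (k : nat) : inord k = (if k == 1%N then 1 else 0) :> 'I_2.
Proof. by case: k => [|[|k]]; apply: val_inj; rewrite /= val_insubd. Qed.

(* When t^2 = 2 lam t + (D - lam^2), [B0 D] is the multiplication table of Z[t]
   in the basis (1, t). *)
Lemma colv_B0_kron2 D t (S1 S2 : 'M[int]_2) j :
  t ^+ 2 = 2 * toR (lam D) * t + toR (D - lam D ^+ 2) ->
  colv t (B0 D *m kron2 S1 S2) j = colv t S1 (inord (j %/ 2)) * colv t S2 (inord (j %% 2)).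
Proof.
move=> t_root; rewrite /colv !mxE !big_ord_recl !big_ord0 !mxE /= !inord2E /=.
rewrite !toRD !toRM (_ : toR (D - lam D ^+ 2) = t ^+ 2 - 2 * toR (lam D) * t); last first.
  by rewrite t_root; ring.
by change (toR 2) with (2 : R); rewrite !toR0 !toR1; ring.
Qed.

Lemma ord4_split (a b : 'I_2) : exists j : 'I_4, inord (j %/ 2) = a /\ inord (j %% 2) = b.
Proof.
have lt_j4 : (2 * a + b < 4)%N by have := ltn_ord a; have := ltn_ord b; lia.
exists (Ordinal lt_j4); rewrite !inord2E /=.
by case: (ord2_cases a) => ->; case: (ord2_cases b) => ->.
Qed.

Lemma det_nbr_mat mu : \det (nbr_mat mu) = 1.
Proof. by rewrite det_mx2 !mxE /=; ring. Qed.

Lemma Lmat_S D (n : nat) : Lmat D n.+1 = Lmat D n *m nbrS D (cycQ D n).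
Proof. by rewrite /Lmat big_ord_recr mulmxE. Qed.

Lemma fmat_cycQ D (n : nat) :
  fmat (cycQ D n) = (Lmat D n)^T *m fmat (Itilde D) *m Lmat D n.
Proof.
elim: n => [|n IHn]; first by rewrite /Lmat big_ord0 trmx1 mul1mx mulmx1.
rewrite Lmat_S /= /right_nbr fmat_form_of_mat; last first.
  by rewrite !trmx_mul trmxK fmat_sym mulmxA.
by rewrite IHn !trmx_mul !mulmxA.
Qed.

Definition conj_bounded (D : int) (S : 'M[int]_2) : Prop :=
  \det S = 1 /\ forall j, `|colv (omega' D) S j| <= 1.

Lemma conj_boundedN D S : conj_bounded D S -> conj_bounded D (- S).
Proof.
case=> detS small; split => [|j]; last by rewrite colvN normrN.
by rewrite det_mx2 !mxE -detS det_mx2; ring.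
Qed.

Lemma entries_le_conj (s l p q : R) : 1 <= s -> l <= s < l + 1 ->
  `|p + q * (l - s)| <= 1 -> `|p| <= `|p + q * (l + s)| + 1 /\ `|q| <= `|p + q * (l + s)| + 1.
Proof.
move=> s_ge1 /andP [l_le l_gt]; rewrite ler_norml => /andP [conj_lo conj_hi].
set a := p + q * (l + s); have /andP [a_lo a_hi] : - `|a| <= a <= `|a| by rewrite -ler_norml.
have q_lo : - (`|a| + 1) <= 2 * s * q by rewrite /a in a_lo a_hi; nra.
have q_hi : 2 * s * q <= `|a| + 1 by rewrite /a in a_lo a_hi; nra.
split; rewrite ler_norml; apply/andP; split;
  by case: (lerP 0 q) => q_sign; rewrite /a in a_lo a_hi *; nra.
Qed.

Lemma colv_le_normm n t (M : 'M[int]_(2, n)) j :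
  0 <= t -> `|colv t M j| <= (1 + t) * toR (normm M).
Proof.
move=> t_ge0; have entry_le i : `|toR (M i j)| <= toR (normm M).
  by rewrite -toR_norm ler_int normm_ge.
apply: le_trans (ler_normD _ _) _; rewrite normrM (ger0_norm t_ge0) mulrDl mul1r mulrC.
by rewrite lerD ?ler_wpM2l.
Qed.

Section QuadraticOrder.
Variable D : int.
Hypothesis D_gt0 : 0 < D.

Lemma sqrtD_sq : sqrtD D ^+ 2 = toR D.
Proof. by rewrite /sqrtD /toR sqr_sqrtr // ler0z ltW. Qed.

Lemma sqrtD_ge1 : 1 <= sqrtD D.
Proof. by rewrite /sqrtD -[X in X <= _]sqrtr1 ler_sqrt /toR ?ler1z ?ler0z; lia. Qed.

Lemma lam_le_sqrtD : toR (lam D) <= sqrtD D.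
Proof. exact: floor_le. Qed.

Lemma sqrtD_lt_lam1 : sqrtD D < toR (lam D) + 1.
Proof. by have := floorD1_gt (sqrtD D); rewrite intrD. Qed.

Lemma lam_ge1 : 1 <= lam D.
Proof. by rewrite /lam floor_ge_int sqrtD_ge1. Qed.

Lemma lam_sq_bounds : lam D ^+ 2 <= D < (lam D + 1) ^+ 2.
Proof.
have lam_ge0 : 0 <= toR (lam D) by rewrite ler0z (le_trans _ lam_ge1).
rewrite -(ler_int R) -(ltr_int R).
change (toR (lam D ^+ 2) <= toR D < toR ((lam D + 1) ^+ 2)).
rewrite !toRE -sqrtD_sq toR1.
by rewrite ler_pXn2r ?ltr_pXn2r ?nnegrE ?lam_le_sqrtD ?sqrtD_lt_lam1 ?sqrtr_ge0 ?addr_ge0.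
Qed.

Lemma omega_root : omega D ^+ 2 = 2 * toR (lam D) * omega D + toR (D - lam D ^+ 2).
Proof. by rewrite /omega !toRE -sqrtD_sq; ring. Qed.

Lemma Itilde_colv (S : 'M[int]_2) i j :
  2 * toR ((S^T *m fmat (Itilde D) *m S) i j)
  = colv (omega D) S i * colv (omega' D) S j + colv (omega D) S j * colv (omega' D) S i.
Proof.
rewrite !mulmx2E !mxE /= /colv /omega /omega' /fa /fb /fc /=.
by rewrite !toRE -sqrtD_sq; ring.
Qed.

Hypothesis D_nonsq : ~ exists m : int, D = m * m.

Lemma sq_eq_mulD (x y : int) : x ^+ 2 = D * y ^+ 2 -> y = 0.
Proof.
move=> sq_eq; apply/eqP; apply: contraT => y_neq0; case: D_nonsq.
have abs_eq : (`|x| ^ 2 = `|D| * `|y| ^ 2)%N by rewrite -!abszX -abszM sq_eq.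
have : (`|y| ^ 2 %| `|x| ^ 2)%N by rewrite abs_eq dvdn_mull.
rewrite dvdn_pexp2r // => /dvdnP [k x_eq]; exists k.
move: abs_eq; rewrite x_eq expnMn => /eqP.
rewrite eqn_pmul2r ?expn_gt0 ?absz_gt0 ?y_neq0 // => /eqP Dk.
by rewrite -[D]gtz0_abs // -Dk -mulnn PoszM.
Qed.

Lemma sqrtD_notint (m : int) : sqrtD D != toR m.
Proof.
apply/eqP => sqrtD_eq; case: D_nonsq; exists m; apply: (@intr_inj R).
by change (toR D = toR (m * m)); rewrite -sqrtD_sq sqrtD_eq toRM expr2.
Qed.

Lemma Itilde11_neq0 (S : 'M[int]_2) : \det S = 1 -> (S^T *m fmat (Itilde D) *m S) 1 1 != 0.
Proof.
move=> detS; have -> : (S^T *m fmat (Itilde D) *m S) 1 1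
    = (S 0 1 + lam D * S 1 1) ^+ 2 - D * S 1 1 ^+ 2.
  by rewrite !mulmx2E !mxE /= /fa /fb /fc /=; ring.
apply/eqP => /eqP; rewrite subr_eq0 => /eqP sq_eq.
have S11 := sq_eq_mulD sq_eq.
have S01 : S 0 1 = 0.
  apply/eqP; rewrite -sqrf_eq0; move: sq_eq.
  by rewrite S11 mulr0 addr0 [0 ^+ 2]expr2 !mulr0 => ->.
by move: detS; rewrite det_mx2 S01 S11 !mul0r mulr0 subr0.
Qed.

Lemma mu_exists q : fc q != 0 -> exists mu, mu_spec D q mu.
Proof.
move=> c_neq0; rewrite /mu_spec.
set s := sqrtD D; set b := toR (fb q); set c := toR (fc q).
have c_neq0R : c != 0 by rewrite intr_eq0.
pose t := (- s - b) / c; have tc : t * c = - s - b by rewrite divfK.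
have t_notint : toR (Num.floor t) != t.
  apply: contra (sqrtD_notint (- fb q - Num.floor t * fc q)) => /eqP floor_t.
  by rewrite !toRE -/s -/b -/c floor_t tc; apply/eqP; ring.
have floor_lt : toR (Num.floor t) < t by rewrite lt_neqAle t_notint floor_le.
have floor1_gt : t < toR (Num.floor t) + 1 by have := floorD1_gt t; rewrite intrD.
rewrite toR_norm -/c.
have [c_gt0|c_le0] := ltP 0 (fc q).
  exists (Num.floor t + 1); have cR_gt0 : 0 < c by rewrite ltr0z.
  by rewrite gtr0_norm // toRM toRD toR1 -/c; split; nra.
exists (Num.floor t); have cR_lt0 : c < 0 by rewrite ltrz0 lt_neqAle c_neq0.
by rewrite ltr0_norm // toRM -/c; split; nra.
Qed.

Lemma mu_of_spec q : fc q != 0 -> mu_spec D q (mu_of D q).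
Proof. by move=> c_neq0; apply: epsilon_spec; apply: mu_exists. Qed.

Lemma nbr_colv'_lt (S : 'M[int]_2) q mu :
  \det S = 1 -> fmat q = S^T *m fmat (Itilde D) *m S -> mu_spec D q mu ->
  `|colv (omega' D) (S *m nbr_mat mu) 1| < `|colv (omega' D) S 1|.
Proof.
move=> detS q_eq [mu_lo mu_hi].
have cross := colv_cross_omega D detS.
have b_eq := Itilde_colv S 0 1; have c_eq := Itilde_colv S 1 1.
rewrite -q_eq fmat01 in b_eq; rewrite -q_eq fmat11 in c_eq.
rewrite colv_nbr1; set a1 := colv (omega D) S 1 in cross b_eq c_eq *.
set a1' := colv (omega' D) S 1 in cross b_eq c_eq *.
have c_val : toR (fc q) = a1 * a1' by lra.
have b_val : toR (fb q) = a1 * colv (omega' D) S 0 - sqrtD D by lra.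
(* The inequalities defining mu say 0 < a1 * (new a1') < |a1 * a1'|. *)
have key : a1 * (colv (omega' D) S 0 + toR mu * a1') = toR (mu * fc q) + toR (fb q) + sqrtD D.
  by rewrite toRM c_val b_val; ring.
have pos : 0 < a1 * (colv (omega' D) S 0 + toR mu * a1') by rewrite key; lra.
have a1_gt0 : 0 < `|a1| by rewrite normr_gt0; apply: contraTneq pos => ->; rewrite mul0r ltxx.
rewrite -(ltr_pM2l a1_gt0) -!normrM (gtr0_norm pos) key.
by move: mu_hi; rewrite toR_norm c_val normrM; lra.
Qed.

Lemma conj_bounded_Lmat (n : nat) : conj_bounded D (Lmat D n).
Proof.
elim: n => [|n [detL smallL]].
  rewrite /Lmat big_ord0; split=> [|j]; first exact: det1.
  have := lam_le_sqrtD; have := sqrtD_lt_lam1.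
  rewrite /colv /omega' !mxE; case: (ord2_cases j) => -> /=.
    by rewrite toR1 toR0 mul0r addr0 normr1.
  by rewrite toR1 toR0 mul1r add0r ler_norml => *; apply/andP; split; lra.
have q_eq := fmat_cycQ D n.
have c_neq0 : fc (cycQ D n) != 0 by rewrite -fmat11 q_eq Itilde11_neq0.
rewrite Lmat_S /nbrS; split=> [|j]; first by rewrite det_mulmx detL det_nbr_mat mul1r.
case: (ord2_cases j) => ->; first by rewrite colv_nbr0 normrN.
exact: ltW (lt_le_trans (nbr_colv'_lt detL q_eq (mu_of_spec c_neq0)) (smallL 1)).
Qed.

Lemma normm_B0 : (normm (B0 D))%:Z <= 2 * lam D.
Proof.
have lam_pos := lam_ge1; have /andP [lam_sq_le D_lt] := lam_sq_bounds.
rewrite -(@gez0_abs (2 * lam D)) ?lez_nat; last lia.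
apply: normm_le => i j; rewrite gez0_abs; last lia.
rewrite mxE; case: (ord2_cases i) => -> /=; case: j => [[|[|[|[|//]]]] ?] /=; nia.
Qed.

Lemma normm_le_colv (S : 'M[int]_2) :
  conj_bounded D S -> exists j, toR (normm S) <= 2 * `|colv (omega D) S j|.
Proof.
case=> detS conj_small.
have s_ge1 := sqrtD_ge1; have lam_bounds : toR (lam D) <= sqrtD D < toR (lam D) + 1.
  by rewrite lam_le_sqrtD sqrtD_lt_lam1.
have entry_le j i : `|toR (S i j)| <= `|colv (omega D) S j| + 1.
  have [p_le q_le] := entries_le_conj s_ge1 lam_bounds (conj_small j).
  by case: (ord2_cases i) => ->.
have sum_ge : 2 * sqrtD D <= `|colv (omega D) S 0| + `|colv (omega D) S 1|.
  rewrite -(colv_cross_omega D detS).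
  apply: le_trans (ler_norm _) _; apply: le_trans (ler_normB _ _) _.
  rewrite !normrM addrC lerD // ler_piMr ?normr_ge0 ?conj_small //.
suff [j0 j0_max] : exists j0, forall j, `|colv (omega D) S j| <= `|colv (omega D) S j0|.
  exists j0; apply: normm_le_real => i j.
  by have := entry_le j i; have := j0_max j; have := j0_max 0; have := j0_max 1; lra.
have [le01|lt10] := lerP `|colv (omega D) S 0| `|colv (omega D) S 1|; [exists 1|exists 0];
  by move=> j; case: (ord2_cases j) => ->; lra.
Qed.

Lemma D_ge2 : 2 <= D.
Proof.
have D_neq1 : D != 1 by apply/eqP => D1; apply: D_nonsq; exists 1; rewrite D1.
by move: D_gt0 D_neq1; lia.
Qed.

Lemma normm_B0_kron2_ge (S1 S2 : 'M[int]_2) : conj_bounded D S1 -> conj_bounded D S2 ->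
  (normm S1 * normm S2)%:Z <= 8 * D * normm (B0 D *m kron2 S1 S2).
Proof.
move=> cb1 cb2; set M := B0 D *m kron2 S1 S2.
have [a N1_le] := normm_le_colv cb1; have [b N2_le] := normm_le_colv cb2.
have [j [ja jb]] := ord4_split a b.
have omega_ge0 : 0 <= omega D.
  by rewrite /omega addr_ge0 ?sqrtr_ge0 // ler0z (le_trans _ lam_ge1).
have := colv_le_normm M j omega_ge0.
rewrite /M colv_B0_kron2 ?omega_root // ja jb normrM -/M => colv_le.
have omega1_le : 1 + omega D <= 2 * toR D.
  have := lam_le_sqrtD; have := sqrtD_ge1; have := sqrtD_sq.
  have : (2 : R) <= toR D by move: D_ge2; rewrite -(ler_int R).
  rewrite /omega; nra.
have NM_ge0 : 0 <= toR (normm M) by rewrite ler0z.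
rewrite -(ler_int R) PoszM !intrM.
change (toR (normm S1) * toR (normm S2) <= 8 * toR D * toR (normm M)).
apply: le_trans (ler_pM _ _ N1_le N2_le) _; rewrite ?ler0z //.
nra.
Qed.

Lemma normm_B0_kron2_le (S1 S2 : 'M[int]_2) :
  (normm (B0 D *m kron2 S1 S2))%:Z <= 8 * lam D * (normm S1 * normm S2).
Proof.
apply: le_trans (_ : (4 * normm (B0 D) * normm (kron2 S1 S2))%N%:Z <= _).
  by rewrite lez_nat normm_mulmx.
have := normm_B0; have := normm_kron2 S1 S2; rewrite -lez_nat; nia.
Qed.

Lemma normm_composition_bounds (S1 S2 S3 : 'M[int]_2) (B : 'M[int]_(2, 4)) i k :
  conj_bounded D S1 -> conj_bounded D S2 -> minor2 B i k != 0 ->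
  S3 *m B = B0 D *m kron2 S1 S2 ->
  (normm S1 * normm S2)%:Z <= 16 * D * (normm S3 * normm B) /\
  (normm S3)%:Z <= 16 * D * (normm S1 * normm S2 * normm B).
Proof.
move=> cb1 cb2 minor_ik S3B.
have lower := normm_B0_kron2_ge cb1 cb2; have upper := normm_B0_kron2_le S1 S2.
rewrite -S3B in lower upper.
have := normm_mulmx S3 B; have := normm_cramer S3 minor_ik; rewrite -!lez_nat !PoszM.
move: (normm S1) (normm S2) (normm S3) (normm B) (normm (S3 *m B)) lower upper.
have lam_le_D : lam D <= D by have := lam_ge1; have /andP [] := lam_sq_bounds; nia.
move=> N1 N2 N3 NB NM lower upper S3_le SB_le.
have NB_ge0 : (0 : int) <= NB by [].
split.
  apply: le_trans lower _; rewrite (_ : 16 * D * _ = 8 * D * (2 * N3 * NB)); last ring.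
  by rewrite ler_wpM2l // mulr_ge0 // ltW.
apply: le_trans S3_le _; apply: le_trans (_ : 2 * (8 * lam D * (N1 * N2)) * NB <= _).
  by rewrite ler_wpM2r // ler_wpM2l.
rewrite (_ : 2 * (8 * lam D * (N1 * N2)) * NB = 16 * lam D * (N1 * N2 * NB) :> int); last ring.
by rewrite ler_wpM2r // ler_wpM2l.
Qed.

End QuadraticOrder.

Definition log2 (x : R) : R := ln x / ln 2.

Lemma ln2_gt0 : 0 < ln (2 : R).
Proof. by apply: ln_gt0; lra. Qed.

Lemma log2_le (x y : R) : 0 < x -> x <= y -> log2 x <= log2 y.
Proof.
move=> x_gt0 x_le_y; rewrite /log2 ler_pM2r ?invr_gt0 ?ln2_gt0 //.
by rewrite ler_ln ?posrE // (lt_le_trans x_gt0).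
Qed.

Lemma log2M (x y : R) : 0 < x -> 0 < y -> log2 (x * y) = log2 x + log2 y.
Proof. by move=> x_gt0 y_gt0; rewrite /log2 lnM ?posrE // mulrDl. Qed.

Lemma log2X2 n : log2 (2 ^+ n) = n%:R.
Proof. by rewrite /log2 lnXn ?mulrnAl ?divff ?gt_eqF ?ln2_gt0 //; lra. Qed.

Lemma logp_max (x : R) : 1 <= x -> logp x = Num.max (log2 x) 2.
Proof.
move=> x_ge1; rewrite /logp ger0_norm; last lra.
have log2_4 : log2 4 = 2 by rewrite (_ : 4 = 2 ^+ 2) ?log2X2 //; rewrite expr2; lra.
rewrite maxEle; case: leP => [x_ge4|x_lt4].
  case: ifP => // log2_le2; apply/eqP; rewrite eq_le log2_le2 -[X in X <= _]log2_4.
  by rewrite log2_le //; lra.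
by rewrite ifT // -log2_4 log2_le //; lra.
Qed.

Lemma logp_ge2 (x : R) : 1 <= x -> 2 <= logp x.
Proof. by move=> x_ge1; rewrite logp_max // le_max lexx orbT. Qed.

Lemma logp_le (x y : R) : 1 <= x -> x <= y -> logp x <= logp y.
Proof.
move=> x_ge1 x_le_y; rewrite !logp_max //; last exact: le_trans x_le_y.
by rewrite le_max2 ?lexx ?log2_le //; lra.
Qed.

Lemma log2_ge0 (x : R) : 1 <= x -> 0 <= log2 x.
Proof. by move=> x_ge1; apply: divr_ge0; [exact: ln_ge0 | exact: ltW ln2_gt0]. Qed.

Lemma logpM_le (x y : R) : 1 <= x -> 1 <= y -> logp (x * y) <= logp x + logp y.
Proof.
move=> x_ge1 y_ge1; have xy_ge1 : 1 <= x * y by rewrite mulr_ege1.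
rewrite !logp_max // log2M; try lra.
have := log2_ge0 x_ge1; have := log2_ge0 y_ge1.
rewrite !maxEle; case: (leP (log2 x) 2); case: (leP (log2 y) 2);
  by case: (leP (log2 x + log2 y) 2); lra.
Qed.

Lemma logpM_ge (x y : R) : 1 <= x -> 1 <= y -> logp x + logp y <= logp (x * y) + 2.
Proof.
move=> x_ge1 y_ge1; have xy_ge1 : 1 <= x * y by rewrite mulr_ege1.
rewrite !logp_max // log2M; try lra.
have := log2_ge0 x_ge1; have := log2_ge0 y_ge1.
rewrite !maxEle; case: (leP (log2 x) 2); case: (leP (log2 y) 2);
  by case: (leP (log2 x + log2 y) 2); lra.
Qed.

Lemma logp16 : logp 16 = 4.
Proof.
rewrite logp_max; last lra.
have -> : 16 = 2 ^+ 4 :> R by rewrite !exprS expr0; lra.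
by rewrite log2X2 maxEle ifF //; apply/negbTE; rewrite -ltNge; lra.
Qed.

Lemma logp_perturbation (d n1 n2 n3 nb c xi : R) :
  1 <= d -> 1 <= n1 -> 1 <= n2 -> 1 <= n3 -> 1 <= nb ->
  n1 * n2 <= 16 * d * (n3 * nb) -> n3 <= 16 * d * (n1 * n2 * nb) ->
  logp nb <= c * logp d -> logp n3 = logp n1 + logp n2 + xi ->
  `|xi| <= (c + 4) * logp d.
Proof.
move=> d_ge1 n1_ge1 n2_ge1 n3_ge1 nb_ge1 lower upper nb_le xi_eq.
have logp_16d u v :
    1 <= u -> 1 <= v -> logp (16 * d * (u * v)) <= 4 + logp d + logp u + logp v.
  move=> u_ge1 v_ge1; rewrite -logp16.
  have ge1_16d : 1 <= 16 * d by lra.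
  apply: le_trans (logpM_le ge1_16d (mulr_ege1 u_ge1 v_ge1)) _.
  by have := logpM_le (_ : 1 <= 16) d_ge1; have := logpM_le u_ge1 v_ge1; lra.
have n12_ge1 : 1 <= n1 * n2 by rewrite mulr_ege1.
have := logp_le n12_ge1 lower; have := logp_16d _ _ n3_ge1 nb_ge1.
have := logp_le n3_ge1 upper; have := logp_16d _ _ n12_ge1 nb_ge1.
have := logpM_le n1_ge1 n2_ge1; have := logpM_ge n1_ge1 n2_ge1; have := logp_ge2 d_ge1.
by rewrite ler_norml mulrDl; lra.
Qed.

Theorem lemma6p3 (D : int) (c1 : R) (Q1 Q2 Q3 : bqform) (k1 k2 : nat) (k3 : int)
    (S1 S2 S3 : 'M[int]_2) (B : 'M[int]_(2, 4)) :
  0 < D -> ~ (exists m : int, D = m * m) ->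
  in_cycle D Q1 -> in_cycle D Q2 -> in_cycle D Q3 ->
  equiv_via (Itilde D) Q1 S1 -> (S1 = Lmat D k1 \/ S1 = - Lmat D k1) ->
  equiv_via (Itilde D) Q2 S2 -> (S2 = Lmat D k2 \/ S2 = - Lmat D k2) ->
  composes Q1 Q2 Q3 B ->
  logp (toR (normm B)) <= c1 * logp (toR D) ->
  S3 *m B = B0 D *m kron2 S1 S2 ->
  (S3 = Lmat D k3 \/ S3 = - Lmat D k3) ->
  forall xi : R,
    logp (toR (normm (Lmat D k3)))
      = logp (toR (normm (Lmat D k1))) + logp (toR (normm (Lmat D k2))) + xi ->
  `|xi| <= (c1 + 4) * logp (toR D).
Proof.
move=> D_gt0 D_nonsq _ _ _ _ S1_pm _ S2_pm [_ [/unimodular24_minor [i [k minor_ik]] _]].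
move=> logB_le S3B S3_pm xi xi_eq.
have normm_pm n S : S = Lmat D n \/ S = - Lmat D n -> normm (Lmat D n) = normm S.
  by case=> ->; rewrite ?normmN.
rewrite (normm_pm _ _ S1_pm) (normm_pm _ _ S2_pm) (normm_pm _ _ S3_pm) in xi_eq.
have bounded_pm (n : nat) S : S = Lmat D n \/ S = - Lmat D n -> conj_bounded D S.
  by case=> ->; [|apply: conj_boundedN]; apply: conj_bounded_Lmat.
have [cb1 cb2] := (bounded_pm _ _ S1_pm, bounded_pm _ _ S2_pm).
have [lower upper] := normm_composition_bounds D_gt0 D_nonsq cb1 cb2 minor_ik S3B.
have [N1_gt0 N2_gt0] := (normm_det1_gt0 cb1.1, normm_det1_gt0 cb2.1).
have [N3_gt0 NB_gt0] : (0 < normm S3)%N /\ (0 < normm B)%N.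
  by move: lower N1_gt0 N2_gt0; nia.
apply: (@logp_perturbation (toR D) (toR (normm S1)) (toR (normm S2)) (toR (normm S3))
  (toR (normm B))) => //; rewrite ?ler1z ?lez_nat //.
all: by rewrite (_ : 16 = toR 16) // -!toRM /toR ler_int -?PoszM.
Qed.
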